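(* Let $m,n,k$ be positive integers. If there exists an orthogonal array $\mathrm{OA}(mn,k,2,2)$, then there exists a set of $k$ mutually orthogonal frequency rectangles of type $\mathrm{FR}(2m,2n;2)$, i.e. a $k$--$\mathrm{MOFR}(2m,2n;2)$.
   Context: A frequency rectangle of type $\mathrm{FR}(m,n;q)$ is an $m\times n$ array on a symbol set $S$ of size $q$ such that each symbol of $S$ appears exactly $n/q$ times in each row and exactly $m/q$ times in each column. Two frequency rectangles of the same type (on the same symbol set) are orthogonal if, when superimposed, each of the $q^2$ ordered pairs of symbols appears the same number of times. A $k$--$\mathrm{MOFR}(m,n;q)$ is a set of $k$ frequency rectangles of type $\mathrm{FR}(m,n;q)$ that are pairwise orthogonal. An orthogonal array $\mathrm{OA}(N,k,q,t)$ is an $N\times k$ array on a symbol set of size $q$ such that in every $N\times t$ subarray each ordered $t$-tuple of symbols appears as a row the same number of times. *)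

From mathcomp Require Import all_boot all_algebra.
Set Implicit Arguments. Unset Strict Implicit. Unset Printing Implicit Defensive.

Definition is_FR (m n q : nat) (A : 'M['I_q]_(m, n)) : Prop :=
  (q %| n) /\ (q %| m) /\
  (forall (i : 'I_m) (s : 'I_q), #|[set j : 'I_n | A i j == s]| = n %/ q) /\
  (forall (j : 'I_n) (s : 'I_q), #|[set i : 'I_m | A i j == s]| = m %/ q).

Definition FR_orth (m n q : nat) (A B : 'M['I_q]_(m, n)) : Prop :=
  exists lambda : nat, forall s t : 'I_q,
    #|[set ij : 'I_m * 'I_n | (A ij.1 ij.2 == s) && (B ij.1 ij.2 == t)]| = lambda.

Definition is_MOFR (k m n q : nat) (F : 'I_k -> 'M['I_q]_(m, n)) : Prop :=
  (forall a, is_FR (F a)) /\ (forall a b : 'I_k, a != b -> FR_orth (F a) (F b)).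

Definition is_OA (N k q t : nat) (A : 'M['I_q]_(N, k)) : Prop :=
  forall c : 'I_t -> 'I_k, injective c ->
    exists lambda : nat, forall u : 'I_t -> 'I_q,
      #|[set r : 'I_N | [forall l : 'I_t, A r (c l) == u l]]| = lambda.

(* Reshape each column of the OA(mn,k,q,2) into an m x n array M_c and replace
   every entry u of M_c by the q x q block (a + b + u)_{a,b} over Z/q, a cyclic
   Latin square; the result is an FR(qm,qn;q) whatever M_c is.  In the block at
   (x,y), the superposition of the expansions of M_c and M_d contains the pair
   (s,t) in the cells with a + b = w exactly when (M_c,M_d)(x,y) = (s-w, t-w),
   so summing over the q^2 cells (a,b) turns the OA condition on the columns c,d
   into orthogonality of the expanded rectangles. *)
From mathcomp Require Import all_boot all_algebra.
Set Implicit Arguments. Unset Strict Implicit. Unset Printing Implicit Defensive.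
Import GRing.Theory.

Lemma card_set_sum (T : finType) (P : pred T) : #|[set x | P x]| = \sum_x P x.
Proof. by rewrite -sum1dep_card big_mkcond; apply: eq_bigr => x _; case: (P x). Qed.

Lemma card_set_pair (T1 T2 : finType) (P : pred (T1 * T2)) :
  #|[set ij | P ij]| = \sum_i \sum_j P (i, j).
Proof. by rewrite card_set_sum pair_bigA; apply: eq_bigr => -[]. Qed.

Lemma addr_eq_sub (V : zmodType) (x y z : V) : (x + y == z)%R = (y == z - x)%R.
Proof. by rewrite (can2_eq (addKr x) (addNKr x)) addrC. Qed.

Lemma sum_addr_eq q (u s : 'I_q.+1) : \sum_(b : 'I_q.+1) (u + b == s)%R = 1.
Proof.
under eq_bigr => b _ do rewrite addr_eq_sub.
by rewrite -big_mkcond big_pred1_eq.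
Qed.

Section MxvecIndex.
Variables m n : nat.

Definition mxvec_unindex (k : 'I_(m * n)) : 'I_m * 'I_n :=
  enum_val (cast_ord (esym (mxvec_cast m n)) k).

Lemma mxvec_unindexK i j : mxvec_unindex (mxvec_index i j) = (i, j).
Proof. by rewrite /mxvec_unindex cast_ordK enum_rankK. Qed.

Lemma sum_mxvec_index (F : 'I_(m * n) -> nat) :
  \sum_k F k = \sum_i \sum_j F (mxvec_index i j).
Proof.
rewrite pair_bigA (reindex (uncurry (@mxvec_index m n))) /=.
  by apply: eq_bigr => -[i j].
exact: curry_mxvec_bij.
Qed.

End MxvecIndex.

Section Blowup.
Variables q m n : nat.

Definition blowup (M : 'M['I_q.+1]_(m, n)) : 'M['I_q.+1]_(q.+1 * m, q.+1 * n) :=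
  \matrix_(i, j)
    let: (a, x) := mxvec_unindex i in let: (b, y) := mxvec_unindex j in
    (a + b + M x y)%R.

Lemma blowupE M a x b y :
  blowup M (mxvec_index a x) (mxvec_index b y) = (a + b + M x y)%R.
Proof. by rewrite mxE !mxvec_unindexK. Qed.

Lemma blowup_FR M : is_FR (blowup M).
Proof.
split; first exact: dvdn_mulr.
split; first exact: dvdn_mulr.
split=> [i | j] s; rewrite card_set_sum sum_mxvec_index exchange_big mulKn //.
- case/mxvec_indexP: i => a x.
  rewrite -[n in RHS]card_ord -sum1_card; apply: eq_bigr => y _.
  under eq_bigr => b _ do rewrite blowupE addrAC.
  exact: sum_addr_eq.
- case/mxvec_indexP: j => b y.
  rewrite -[m in RHS]card_ord -sum1_card; apply: eq_bigr => x _.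
  under eq_bigr => a _ do rewrite blowupE [(a + b)%R]addrC addrAC.
  exact: sum_addr_eq.
Qed.

Lemma blowup_orth M N : FR_orth M N -> FR_orth (blowup M) (blowup N).
Proof.
case=> lam countMN; exists (q.+1 * (q.+1 * lam)) => s t.
rewrite card_set_pair sum_mxvec_index.
under eq_bigr => a _ do under eq_bigr => x _ do rewrite sum_mxvec_index.
under eq_bigr => a _ do rewrite exchange_big.
transitivity (\sum_(a : 'I_q.+1) \sum_(b : 'I_q.+1) lam); last first.
  by under eq_bigr do rewrite sum_nat_const card_ord; rewrite sum_nat_const card_ord.
apply: eq_bigr => a _; apply: eq_bigr => b _.
rewrite -(countMN (s - (a + b)) (t - (a + b)))%R card_set_pair.
by apply: eq_bigr => x _; apply: eq_bigr => y _; rewrite !blowupE !addr_eq_sub.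
Qed.

End Blowup.

Definition orth_cols N k q (A : 'M['I_q]_(N, k)) (c d : 'I_k) : Prop :=
  exists lam : nat, forall s t : 'I_q,
    #|[set r | (A r c == s) && (A r d == t)]| = lam.

Lemma ord2_cases (l : 'I_2) : l = ord0 \/ l = ord_max.
Proof. by case: l => [[|[|]]] // ?; [left | right]; apply: val_inj. Qed.

Lemma forall_ord2 (P : pred 'I_2) : [forall l, P l] = P ord0 && P ord_max.
Proof.
apply/forallP/andP => [P_all | [P0 P1] l]; first by split; apply: P_all.
by case: (ord2_cases l) => ->.
Qed.

Lemma OA2_orth_cols N k q (A : 'M['I_q]_(N, k)) (c d : 'I_k) :
  is_OA 2 A -> c != d -> orth_cols A c d.
Proof.
move=> oaA neq_cd.
pose cd (l : 'I_2) := if l == ord0 then c else d.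
have cd_inj : injective cd.
  move=> l1 l2; rewrite /cd.
  by case: (ord2_cases l1) => ->; case: (ord2_cases l2) => -> //= eq_cd;
    rewrite eq_cd eqxx in neq_cd.
have [lam count_cd] := oaA cd cd_inj.
exists lam => s t; rewrite -(count_cd (fun l => if l == ord0 then s else t)).
by apply: eq_card => r; rewrite !inE forall_ord2.
Qed.

Lemma orth_cols_vec_mx m n k q (A : 'M['I_q]_(m * n, k)) (c d : 'I_k) :
  orth_cols A c d -> FR_orth (vec_mx (col c A)^T) (vec_mx (col d A)^T).
Proof.
case=> lam count_cd; exists lam => s t.
rewrite -(count_cd s t) card_set_pair card_set_sum sum_mxvec_index.
by apply: eq_bigr => x _; apply: eq_bigr => y _; rewrite !mxE.
Qed.

Theorem mainTheorem1 (m n k : nat) (hm : 0 < m) (hn : 0 < n) (hk : 0 < k) :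
  (exists A : 'M['I_2]_(m * n, k), is_OA 2 A) ->
  exists F : 'I_k -> 'M['I_2]_(2 * m, 2 * n), is_MOFR F.
Proof.
case=> A oaA; exists (fun c => blowup (vec_mx (col c A)^T)).
split=> [c | c d neq_cd]; first exact: blowup_FR.
by apply/blowup_orth/orth_cols_vec_mx/OA2_orth_cols.
Qed.
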